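(* For the system $\dot n^x=P(n^x,n^y)$, $\dot n^y=Q(n^x,n^y)$, the set of stationary points in the open quadrant $(0,\infty)^2$ is either infinite (a curve of fixed points) or finite, and in the finite case it has: at most $3$ points if $\beta\ne0$ and $\mu\ne0$; at most $2$ points if $\beta=0,\mu=1$; at most $1$ point if $\beta=1,\mu=0$.
   Context: Let $r(x),r(y)>0$, $C(u,v)>0$ for $u,v\in\{x,y\}$, $\alpha(x,y)\in\mathbb R$, and $\beta,\mu\ge0$ with $\beta+\mu>0$. Define $$P(u,v)=\Big(r(x)-C(x,x)u-C(x,y)v+\frac{\alpha(x,y)}{\beta+\mu(u+v)}v\Big)u,\qquad Q(u,v)=\Big(r(y)-C(y,x)u-C(y,y)v-\frac{\alpha(x,y)}{\beta+\mu(u+v)}u\Big)v.$$ *)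

From Stdlib Require Import Reals Ensembles Finite_sets.
Open Scope R_scope.

(* Right-hand sides of the two-species system, parameters
   rx = r(x), ry = r(y), Cxx = C(x,x), Cxy = C(x,y), Cyx = C(y,x),
   Cyy = C(y,y), a = alpha(x,y). *)
Definition Pf (rx Cxx Cxy a beta mu : R) (u v : R) : R :=
  (rx - Cxx * u - Cxy * v + a / (beta + mu * (u + v)) * v) * u.

Definition Qf (ry Cyx Cyy a beta mu : R) (u v : R) : R :=
  (ry - Cyx * u - Cyy * v - a / (beta + mu * (u + v)) * u) * v.

Definition stationary_set (rx ry Cxx Cxy Cyx Cyy a beta mu : R) : Ensemble (R * R) :=
  fun p => 0 < fst p /\ 0 < snd p /\
           Pf rx Cxx Cxy a beta mu (fst p) (snd p) = 0 /\
           Qf ry Cyx Cyy a beta mu (fst p) (snd p) = 0.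

(* A stationary point (u, v) of the open quadrant is determined by its slope t = v / u.
   Adding t times the second nullcline equation to the first eliminates alpha and forces
   u = (rx + ry t) / (Cxx + (Cxy + Cyx) t + Cyy t^2); substituting back, the system reduces
   to F(t) = 0 for a cubic F.  For beta = 0, mu = 1 (resp. beta = 1, mu = 0) F is a positive
   function of t times a quadratic (resp. linear) polynomial.  A polynomial of degree d with
   more than d roots vanishes identically, and then every slope t > 0 yields a stationary
   point, so the set is infinite. *)
From Stdlib Require Import Reals Ensembles Finite_sets List Lra Lia Psatz Classical.
Import ListNotations.
Open Scope R_scope.

Lemma cardinal_enumeration {U} (E : Ensemble U) n : cardinal U E n ->
  exists l, NoDup l /\ length l = n /\ forall x, List.In x l <-> Ensembles.In U E x.
Proof.
  induction 1 as [|A m _ [l [Hnd [Hlen Hl]]] x Hx].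
  - exists []. split; [constructor |]. split; [reflexivity |]. split; intros [].
  - exists (x :: l). split; [constructor; [rewrite Hl |]; assumption |].
    split; [simpl; lia |]. split.
    + intros [<- | Hy]; [apply Union_intror; constructor | apply Union_introl, Hl, Hy].
    + intros [y Hy | y Hy]; [right; apply Hl, Hy | destruct Hy; left; reflexivity].
Qed.

Lemma cardinal_no_nat_injection {U} (E : Ensemble U) n (f : nat -> U) :
  cardinal U E n -> (forall i, Ensembles.In U E (f i)) ->
  (forall i j, f i = f j -> i = j) -> False.
Proof.
  intros Hc Hf Hinj.
  destruct (cardinal_enumeration E n Hc) as [l [_ [Hlen Hl]]].
  assert (Hle : (length (map f (seq 0 (S n))) <= length l)%nat).
  { apply NoDup_incl_length.
    - apply NoDup_map_NoDup_ForallPairs; [intros i j _ _; apply Hinj | apply seq_NoDup].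
    - intros x Hx. apply in_map_iff in Hx as [i [<- _]]. apply Hl, Hf. }
  rewrite length_map, length_seq in Hle. lia.
Qed.

Fixpoint horner (cs : list R) (t : R) : R :=
  match cs with
  | [] => 0
  | c :: cs' => c + t * horner cs' t
  end.

Fixpoint horner_quot (r : R) (cs : list R) : list R :=
  match cs with
  | _ :: (_ :: _) as cs' => horner cs' r :: horner_quot r cs'
  | _ => []
  end.

Lemma horner_cons c cs t : horner (c :: cs) t = c + t * horner cs t.
Proof. reflexivity. Qed.

Lemma horner_factor r cs t :
  horner cs t = horner cs r + (t - r) * horner (horner_quot r cs) t.
Proof.
  induction cs as [|c [|d cs] IH]; [simpl; ring | simpl; ring |].
  change (horner_quot r (c :: d :: cs))
    with (horner (d :: cs) r :: horner_quot r (d :: cs)).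
  rewrite !(horner_cons c), (horner_cons (horner (d :: cs) r)), IH. ring.
Qed.

Lemma length_horner_quot r cs : length (horner_quot r cs) = pred (length cs).
Proof. induction cs as [|c [|d cs] IH]; simpl in *; auto. Qed.

Lemma horner_roots_eq0 cs l :
  NoDup l -> (length cs <= length l)%nat ->
  (forall x, List.In x l -> horner cs x = 0) -> forall t, horner cs t = 0.
Proof.
  revert cs; induction l as [|r l IH]; intros cs Hnd Hlen Hroot t.
  - destruct cs; simpl in Hlen; [reflexivity | lia].
  - apply NoDup_cons_iff in Hnd as [Hr Hnd].
    rewrite (horner_factor r), (Hroot r (in_eq r l)).
    rewrite (IH (horner_quot r cs)); [ring | exact Hnd | |].
    + rewrite length_horner_quot. simpl in Hlen. lia.
    + intros x Hx.
      assert (Hxr : x - r <> 0) by (intro; apply Hr; replace r with x by lra; exact Hx).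
      pose proof (horner_factor r cs x) as E.
      rewrite (Hroot r (in_eq r l)), (Hroot x (in_cons r x l Hx)), Rplus_0_l in E.
      apply eq_sym, Rmult_integral in E as [|]; [contradiction | easy].
Qed.

Section Stationary_points.

Variables rx ry Cxx Cxy Cyx Cyy a beta mu : R.
Hypotheses (hrx : 0 < rx) (hry : 0 < ry)
  (hCxx : 0 < Cxx) (hCxy : 0 < Cxy) (hCyx : 0 < Cyx) (hCyy : 0 < Cyy)
  (hbeta : 0 <= beta) (hmu : 0 <= mu) (hbm : 0 < beta + mu).

(* [qform t] and [growth t] are the quadratic form C and the growth vector r evaluated
   at the direction (1, t). *)
Definition qform t := Cxx + (Cxy + Cyx) * t + Cyy * t * t.
Definition growth t := rx + ry * t.

Definition slope_poly t :=
  ((rx * Cyx - ry * Cxx) + (rx * Cyy - ry * Cxy) * t) *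
    (beta * qform t + mu * growth t * (1 + t))
  + a * growth t * qform t.

Definition slope_point t := (growth t / qform t, t * (growth t / qform t)).

Lemma qform_pos t : 0 < t -> 0 < qform t.
Proof. intro; unfold qform; nra. Qed.

Lemma growth_pos t : 0 < t -> 0 < growth t.
Proof. intro; unfold growth; nra. Qed.

Lemma stationary_slope_iff u t : 0 < u -> 0 < t ->
  Pf rx Cxx Cxy a beta mu u (t * u) = 0 /\ Qf ry Cyx Cyy a beta mu u (t * u) = 0 <->
  u * qform t = growth t /\ slope_poly t = 0.
Proof.
  intros Hu Ht.
  set (D := beta + mu * (u + t * u)).
  assert (HD : 0 < D).
  { assert (0 < u + t * u) by nra.
    unfold D; destruct hmu as [Hm | <-]; nra. }
  set (A := rx - Cxx * u - Cxy * (t * u) + a / D * (t * u)).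
  set (B := ry - Cyx * u - Cyy * (t * u) - a / D * u).
  assert (HPf : Pf rx Cxx Cxy a beta mu u (t * u) = A * u) by reflexivity.
  assert (HQf : Qf ry Cyx Cyy a beta mu u (t * u) = B * (t * u)) by reflexivity.
  assert (Helim : A + t * B = growth t - u * qform t) by (unfold A, B, growth, qform; ring).
  assert (Hslope : u * qform t = growth t ->
                   t * slope_poly t = qform t * qform t * D * A).
  { intro Hu'. assert (Hrx : rx = u * qform t - ry * t) by (unfold growth in Hu'; lra).
    unfold slope_poly, growth, A, D. rewrite Hrx. unfold qform. field. unfold D in HD; lra. }
  pose proof (qform_pos t Ht).
  rewrite HPf, HQf. split.
  - intros [HA HB].
    apply Rmult_integral in HA as [HA | Hu0]; [| lra].
    apply Rmult_integral in HB as [HB | Htu]; [| nra].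
    assert (Hu' : u * qform t = growth t) by (rewrite HA, HB in Helim; lra).
    split; [exact Hu' |].
    specialize (Hslope Hu'). rewrite HA, Rmult_0_r in Hslope.
    apply Rmult_integral in Hslope as [|]; [lra | assumption].
  - intros [Hu' HF]. specialize (Hslope Hu'). rewrite HF, Rmult_0_r in Hslope.
    assert (0 < qform t * qform t * D) by (repeat apply Rmult_lt_0_compat; assumption).
    apply eq_sym, Rmult_integral in Hslope as [|HA]; [lra |].
    rewrite Hu', Rminus_diag, HA, Rplus_0_l in Helim.
    apply Rmult_integral in Helim as [|HB]; [lra |].
    rewrite HA, HB. split; ring.
Qed.

Lemma slope_point_ratio t : 0 < t -> snd (slope_point t) / fst (slope_point t) = t.
Proof.
  intro Ht. pose proof (qform_pos t Ht). pose proof (growth_pos t Ht).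
  simpl. field. split; lra.
Qed.

Lemma slope_point_inj t1 t2 : 0 < t1 -> 0 < t2 -> slope_point t1 = slope_point t2 -> t1 = t2.
Proof.
  intros H1 H2 E. rewrite <- (slope_point_ratio t1 H1), <- (slope_point_ratio t2 H2), E.
  reflexivity.
Qed.

Let stationary := stationary_set rx ry Cxx Cxy Cyx Cyy a beta mu.

Lemma stationary_slope p : Ensembles.In _ stationary p ->
  let t := snd p / fst p in 0 < t /\ slope_poly t = 0 /\ p = slope_point t.
Proof.
  destruct p as [u v]; intros [Hu [Hv [HP HQ]]] t; simpl in *.
  assert (Ht : 0 < t) by (apply Rdiv_lt_0_compat; assumption).
  assert (Hv' : v = t * u) by (unfold t; field; lra).
  rewrite Hv' in HP, HQ.
  destruct (proj1 (stationary_slope_iff u t Hu Ht) (conj HP HQ)) as [Hu' HF].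
  repeat split; [assumption | assumption |].
  pose proof (qform_pos t Ht).
  unfold slope_point. rewrite <- Hu', Hv'. f_equal; field; lra.
Qed.

Lemma slope_point_stationary t :
  0 < t -> slope_poly t = 0 -> Ensembles.In _ stationary (slope_point t).
Proof.
  intros Ht HF. pose proof (qform_pos t Ht). pose proof (growth_pos t Ht).
  assert (Hu : 0 < growth t / qform t) by (apply Rdiv_lt_0_compat; assumption).
  destruct (proj2 (stationary_slope_iff _ t Hu Ht)) as [HP HQ].
  { split; [field; lra | exact HF]. }
  repeat split; simpl; [assumption | nra | assumption | assumption].
Qed.

Lemma stationary_card_lt (cs : list R) (h : R -> R) n :
  (forall t, 0 < t -> h t <> 0) -> (forall t, slope_poly t = h t * horner cs t) ->
  cardinal _ stationary n -> (n < length cs)%nat.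
Proof.
  intros Hh Hfac Hc.
  destruct (Nat.lt_ge_cases n (length cs)) as [|Hle]; [assumption | exfalso].
  destruct (cardinal_enumeration stationary n Hc) as [l [Hnd [Hlen Hl]]].
  set (ratio := fun p : R * R => snd p / fst p).
  assert (Hzero : forall t, horner cs t = 0).
  { apply (horner_roots_eq0 cs (map ratio l)).
    - apply NoDup_map_NoDup_ForallPairs; [| exact Hnd].
      intros p q Hp Hq E.
      destruct (stationary_slope p (proj1 (Hl p) Hp)) as [_ [_ Ep]].
      destruct (stationary_slope q (proj1 (Hl q) Hq)) as [_ [_ Eq]].
      rewrite Ep, Eq. unfold ratio in E. rewrite E. reflexivity.
    - rewrite length_map. lia.
    - intros x Hx. apply in_map_iff in Hx as [p [<- Hp]].
      destruct (stationary_slope p (proj1 (Hl p) Hp)) as [Ht [HF _]].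
      rewrite Hfac in HF.
      apply Rmult_integral in HF as [HF | HF]; [destruct (Hh _ Ht HF) | exact HF]. }
  apply (cardinal_no_nat_injection stationary n (fun i => slope_point (INR (S i))) Hc).
  - intro i. apply slope_point_stationary; [apply lt_0_INR; lia |].
    rewrite Hfac, Hzero. ring.
  - intros i j E. apply slope_point_inj in E; [| apply lt_0_INR; lia ..].
    apply INR_eq in E. lia.
Qed.

Lemma stationary_card_le_3 n : cardinal _ stationary n -> (n <= 3)%nat.
Proof.
  intro Hc.
  set (c0 := rx * Cyx - ry * Cxx). set (c1 := rx * Cyy - ry * Cxy).
  set (m0 := beta * Cxx + mu * rx). set (m1 := beta * (Cxy + Cyx) + mu * (rx + ry)).
  set (m2 := beta * Cyy + mu * ry).
  enough (n < length [c0 * m0 + a * rx * Cxx;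
                      c0 * m1 + c1 * m0 + a * (rx * (Cxy + Cyx) + ry * Cxx);
                      c0 * m2 + c1 * m1 + a * (rx * Cyy + ry * (Cxy + Cyx));
                      c1 * m2 + a * ry * Cyy]%R)%nat by (simpl in *; lia).
  apply (stationary_card_lt _ (fun _ => 1)); [intros; lra | | exact Hc].
  intro t. unfold slope_poly, qform, growth, c0, c1, m0, m1, m2. simpl. ring.
Qed.

Lemma stationary_card_le_2 n : beta = 0 -> mu = 1 -> cardinal _ stationary n -> (n <= 2)%nat.
Proof.
  intros Hb Hm Hc.
  set (c0 := rx * Cyx - ry * Cxx). set (c1 := rx * Cyy - ry * Cxy).
  enough (n < length [c0 + a * Cxx; c0 + c1 + a * (Cxy + Cyx); c1 + a * Cyy]%R)%nat
    by (simpl in *; lia).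
  apply (stationary_card_lt _ growth); [| | exact Hc].
  { intros t Ht. pose proof (growth_pos t Ht). lra. }
  intro t. unfold slope_poly, qform, growth, c0, c1. rewrite Hb, Hm. simpl. ring.
Qed.

Lemma stationary_card_le_1 n : beta = 1 -> mu = 0 -> cardinal _ stationary n -> (n <= 1)%nat.
Proof.
  intros Hb Hm Hc.
  set (c0 := rx * Cyx - ry * Cxx). set (c1 := rx * Cyy - ry * Cxy).
  enough (n < length [c0 + a * rx; c1 + a * ry]%R)%nat by (simpl in *; lia).
  apply (stationary_card_lt _ qform); [| | exact Hc].
  { intros t Ht. pose proof (qform_pos t Ht). lra. }
  intro t. unfold slope_poly, qform, growth, c0, c1. rewrite Hb, Hm. simpl. ring.
Qed.

End Stationary_points.

Theorem mainTheorem7 (rx ry Cxx Cxy Cyx Cyy a beta mu : R)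
  (hrx : 0 < rx) (hry : 0 < ry)
  (hCxx : 0 < Cxx) (hCxy : 0 < Cxy) (hCyx : 0 < Cyx) (hCyy : 0 < Cyy)
  (hbeta : 0 <= beta) (hmu : 0 <= mu) (hbm : 0 < beta + mu) :
  let S := stationary_set rx ry Cxx Cxy Cyx Cyy a beta mu in
  ~ Finite (R * R) S \/
  (Finite (R * R) S /\
   (beta <> 0 -> mu <> 0 -> forall n, cardinal (R * R) S n -> (n <= 3)%nat) /\
   (beta = 0 -> mu = 1 -> forall n, cardinal (R * R) S n -> (n <= 2)%nat) /\
   (beta = 1 -> mu = 0 -> forall n, cardinal (R * R) S n -> (n <= 1)%nat)).
Proof.
  intro S.
  destruct (classic (Finite (R * R) S)) as [Hfin | Hinf]; [right | left; exact Hinf].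
  repeat split; [exact Hfin | intros _ _ n | intros Hb Hm n | intros Hb Hm n].
  - exact (stationary_card_le_3 rx ry Cxx Cxy Cyx Cyy a beta mu
             hrx hry hCxx hCxy hCyx hCyy hbeta hmu hbm n).
  - exact (stationary_card_le_2 rx ry Cxx Cxy Cyx Cyy a beta mu
             hrx hry hCxx hCxy hCyx hCyy hbeta hmu hbm n Hb Hm).
  - exact (stationary_card_le_1 rx ry Cxx Cxy Cyx Cyy a beta mu
             hrx hry hCxx hCxy hCyx hCyy hbeta hmu hbm n Hb Hm).
Qed.
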